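(* Let $\mathcal F=\{K_4,C_5,C_6,C_7,B_5\}$ and let $G$ be an $\mathcal F$-free graph. If $G$ contains one of the configurations (C1)–(C13) below, and $H$ is the subgraph of $G$ induced by the vertices of that configuration, then $H$ is $(\mathcal F,4)$-boundary-reducible in $G$ with reduced part $R=V(H)\setminus B$, where $B$ is the boundary specified for the configuration (empty if none is specified). (C1) a vertex of degree at most $2$. (C2) three $3$-vertices $u,v,w$ with $uv,vw\in E(G)$. (C3) a triangle all of whose vertices are $3$-vertices. (C4) a diamond $D=\mathrm{Dia}(4-3,4,5^+)$ together with a $3$-vertex $u\notin V(D)$ adjacent to the middle $4$-vertex of $D$; boundary: the side $5^+$-vertex of $D$. (C5) $\mathrm{Dia}(3-3,5^+,5^+)$; boundary: its two side vertices. (C6) $\mathrm{Dia}(3-5^+,3,5^+)$; boundary: its middle $5^+$-vertex and its side $5^+$-vertex. (C7) $\mathrm{Dia}(5-4,3,3)$. (C8) $D_1=\mathrm{Dia}(4-4,5,3)$ and $D_2=\mathrm{Dia}(5-3,4,4^+)$, where the side $5$-vertex of $D_1$ is the middle $5$-vertex of $D_2$; $D_2$ has side vertices $s$ (a $4$-vertex) and $v$ (a $4^+$-vertex); boundary: $v$. (C9) two diamonds $D_1,D_2$, each $\mathrm{Dia}(3-4,4,5^+)$, such that the middle $4$-vertex of $D_1$ is adjacent to the middle $4$-vertex of $D_2$; boundary: the side $5^+$-vertices of $D_1$ and $D_2$. (C10) $D_1=\mathrm{Dia}(4-3,5^+,5)$ with side vertices $p$ (a $5^+$-vertex) and $q$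 (a $5$-vertex), and $D_2=\mathrm{Dia}(5-3,4,4^+)$ whose middle $5$-vertex is $q$, with side vertices a $4$-vertex and a $4^+$-vertex $v$; boundary: $p$ and $v$. (C11) $\mathrm{Dia}(4-4,3,4)$ together with a $3$-vertex outside it adjacent to one of its middle $4$-vertices. (C12) $D_1=\mathrm{Dia}(3-4,4,5^+)$ and $D_2=\mathrm{Dia}(4-4,4,3)$, where the middle $4$-vertex of $D_1$ is adjacent to a middle $4$-vertex of $D_2$; boundary: the side $5^+$-vertex of $D_1$. (C13) $D_1=\mathrm{Dia}(3-5,5,5)$ and $D_2,D_3$, each $\mathrm{Dia}(5-3,4,5^+)$, where the two side vertices of $D_1$ are the middle $5$-vertices of $D_2$ and of $D_3$, respectively; boundary: the side $5^+$-vertices of $D_2$ and $D_3$.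
   Context: $B_5$ is the book on $5$ vertices: an edge $xy$ plus three further vertices each adjacent to exactly $x$ and $y$. $\mathcal F$-free graph: no subgraph isomorphic to a member of $\mathcal F$. All degrees are degrees in $G$; a $d$-vertex ($d^+$-vertex) is a vertex of degree exactly $d$ (at least $d$). A diamond is a subgraph isomorphic to $K_4$ minus an edge; its two vertices of degree $3$ in it are middle vertices, the other two are side vertices. $\mathrm{Dia}(a-b,c,d)$ denotes a diamond whose middle vertices have degrees $a,b$ and whose side vertices have degrees $c,d$; an entry $s^+$ means degree at least $s$. Vertices of distinct pieces of a configuration are distinct except where explicitly identified. For an induced subgraph $H$ of $G$ and $\emptyset\neq R\subseteq V(H)$, $\deg_R(v)$ is the degree of $v$ in $G[R]$. A set $I\subseteq V(H)$ is $\mathcal F$-free if adding to $H$ a new vertex adjacent exactly to $I$ creates no subgraph isomorphic to a member of $\mathcal F$. For $f:R\to\mathbb Z$, an $f$-assignment is a list assignment $L$ on $R$ with $|L(v)|\ge f(v)$; $f\downarrow v$ is $f$ changed to value $1$ at $v$; $1_I$ is the indicator of $I$. $H$ is $(\mathcal F,k)$-boundary-reducible in $G$ with reduced part $R$ if (FIX) for every $v\in R$, $H[R]$ is properly $L$-colorable for every $((k-\deg_G+\deg_R)\downarrow v)$-assignment $L$, and (FORB) for every $\mathcal F$-free $I\subseteq R$ with $|I|\le k-2$, $H[R]$ is properly $L$-colorable for every $(k-\deg_G+\deg_R-1_I)$-assignment $L$. *)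

(* Finite simple graphs as symmetric irreflexive relations on a finType. *)
From mathcomp Require Import all_boot all_algebra.
Set Implicit Arguments. Unset Strict Implicit. Unset Printing Implicit Defensive.
Import GRing.Theory Num.Theory.

Definition contains_sub (X : finType) (W : {set X}) (r : rel X) (n : nat)
  (P : rel 'I_n) : Prop :=
  exists f : 'I_n -> X,
    injective f /\ (forall i, f i \in W) /\ (forall i j, P i j -> r (f i) (f j)).

Definition K4_rel : rel 'I_4 := fun i j => i != j.
Definition cycle_rel (k : nat) : rel 'I_k :=
  fun i j => (val j == (val i).+1 %% k) || (val i == (val j).+1 %% k).
(** B_5: vertices 0 = x, 1 = y, and 2,3,4 adjacent to both x and y. *)
Definition book5_rel : rel 'I_5 := fun i j =>
  [|| (val i == 0) && (val j == 1), (val i == 1) && (val j == 0),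
      (val i <= 1) && (2 <= val j) | (val j <= 1) && (2 <= val i)].

Definition F_free (X : finType) (W : {set X}) (r : rel X) : Prop :=
  ~ contains_sub W r K4_rel /\ ~ contains_sub W r (@cycle_rel 5) /\
  ~ contains_sub W r (@cycle_rel 6) /\ ~ contains_sub W r (@cycle_rel 7) /\
  ~ contains_sub W r book5_rel.

Section Defs.
Variable T : finType.
Implicit Types (e : rel T) (R S I B : {set T}).

Definition deg e (v : T) : nat := #|[set u | e v u]|.
Definition degR e R (v : T) : nat := #|[set u in R | e v u]|.

(** H = G[S] plus a new vertex (None) adjacent exactly to I. *)
Definition ext_vset S : {set option T} := None |: [set Some v | v in S].
Definition ext_rel S I e : rel (option T) := fun x y =>
  match x, y with
  | Some u, Some v => e u v
  | None, Some v => v \in I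
  | Some u, None => u \in I
  | None, None => false
  end.

Definition colorable e R (L : T -> seq nat) : Prop :=
  exists c : T -> nat, (forall v, v \in R -> c v \in L v) /\
    (forall u v, u \in R -> v \in R -> e u v -> c u != c v).

Definition is_fassign R (f : T -> int) (L : T -> seq nat) : Prop :=
  forall v, v \in R -> (f v <= (size (undup (L v)))%:Z)%R.

Definition bval (k : nat) e R (v : T) : int :=
  (k%:Z - (deg e v)%:Z + (degR e R v)%:Z)%R.

Definition boundary_reducible
  (Fam : forall X : finType, {set X} -> rel X -> Prop) (k : nat) e S R : Prop :=
  [/\ R \subset S, R != set0,
   (forall v, v \in R -> forall L,
      is_fassign R (fun u => if u == v then 1%R else bval k e R u) L ->
      colorable e R L) &
   (forall I, I \subset R -> Fam _ (ext_vset S) (ext_rel S I e) -> #|I| <= k - 2 ->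
      forall L, is_fassign R (fun u => bval k e R u - (nat_of_bool (u \in I))%:Z)%R L ->
      colorable e R L)].

(** Degree specifications: exactly n, or at least n (written n^+). *)
Inductive dspec := Ex of nat | AL of nat.
Definition dsat e (v : T) (s : dspec) : Prop :=
  match s with Ex n => deg e v = n | AL n => n <= deg e v end.

(** Diamond with middle vertices m1 m2 and side vertices s1 s2. *)
Definition diamond e (m1 m2 s1 s2 : T) : Prop :=
  uniq [:: m1; m2; s1; s2] /\ e m1 m2 /\ e m1 s1 /\ e m1 s2 /\ e m2 s1 /\ e m2 s2.
(** Dia(a-b,c,d) with middle m1 (deg a), m2 (deg b), sides s1 (deg c), s2 (deg d). *)
Definition Dia e (a b c d : dspec) (m1 m2 s1 s2 : T) : Prop :=
  diamond e m1 m2 s1 s2 /\ dsat e m1 a /\ dsat e m2 b /\ dsat e s1 c /\ dsat e s2 d.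

(** Configurations: S = vertex set, B = boundary. *)
Definition C1 e S B := exists v, deg e v <= 2 /\ S = [set v] /\ B = set0.
Definition C2 e S B := exists u v w, uniq [:: u; v; w] /\
  deg e u = 3 /\ deg e v = 3 /\ deg e w = 3 /\ e u v /\ e v w /\
  S = [set u; v; w] /\ B = set0.
Definition C3 e S B := exists u v w, uniq [:: u; v; w] /\
  deg e u = 3 /\ deg e v = 3 /\ deg e w = 3 /\ e u v /\ e v w /\ e u w /\
  S = [set u; v; w] /\ B = set0.
Definition C4 e S B := exists m1 m2 s1 s2 u,
  Dia e (Ex 4) (Ex 3) (Ex 4) (AL 5) m1 m2 s1 s2 /\ uniq [:: m1; m2; s1; s2; u] /\
  deg e u = 3 /\ e u m1 /\ S = [set m1; m2; s1; s2; u] /\ B = [set s2].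
Definition C5 e S B := exists m1 m2 s1 s2,
  Dia e (Ex 3) (Ex 3) (AL 5) (AL 5) m1 m2 s1 s2 /\
  S = [set m1; m2; s1; s2] /\ B = [set s1; s2].
Definition C6 e S B := exists m1 m2 s1 s2,
  Dia e (Ex 3) (AL 5) (Ex 3) (AL 5) m1 m2 s1 s2 /\
  S = [set m1; m2; s1; s2] /\ B = [set m2; s2].
Definition C7 e S B := exists m1 m2 s1 s2,
  Dia e (Ex 5) (Ex 4) (Ex 3) (Ex 3) m1 m2 s1 s2 /\
  S = [set m1; m2; s1; s2] /\ B = set0.
Definition C8 e S B := exists a1 b1 x c1 m s v,
  Dia e (Ex 4) (Ex 4) (Ex 5) (Ex 3) a1 b1 x c1 /\
  Dia e (Ex 5) (Ex 3) (Ex 4) (AL 4) x m s v /\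
  uniq [:: a1; b1; x; c1; m; s; v] /\
  S = [set a1; b1; x; c1; m; s; v] /\ B = [set v].
Definition C9 e S B := exists p1 q1 r1 t1 p2 q2 r2 t2,
  Dia e (Ex 3) (Ex 4) (Ex 4) (AL 5) p1 q1 r1 t1 /\
  Dia e (Ex 3) (Ex 4) (Ex 4) (AL 5) p2 q2 r2 t2 /\ e q1 q2 /\
  uniq [:: p1; q1; r1; t1; p2; q2; r2; t2] /\
  S = [set p1; q1; r1; t1; p2; q2; r2; t2] /\ B = [set t1; t2].
Definition C10 e S B := exists a b p q m s v,
  Dia e (Ex 4) (Ex 3) (AL 5) (Ex 5) a b p q /\
  Dia e (Ex 5) (Ex 3) (Ex 4) (AL 4) q m s v /\
  uniq [:: a; b; p; q; m; s; v] /\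
  S = [set a; b; p; q; m; s; v] /\ B = [set p; v].
Definition C11 e S B := exists m1 m2 s1 s2 u,
  Dia e (Ex 4) (Ex 4) (Ex 3) (Ex 4) m1 m2 s1 s2 /\ uniq [:: m1; m2; s1; s2; u] /\
  deg e u = 3 /\ (e u m1 \/ e u m2) /\
  S = [set m1; m2; s1; s2; u] /\ B = set0.
Definition C12 e S B := exists p1 q1 r1 t1 a b c d,
  Dia e (Ex 3) (Ex 4) (Ex 4) (AL 5) p1 q1 r1 t1 /\
  Dia e (Ex 4) (Ex 4) (Ex 4) (Ex 3) a b c d /\ (e q1 a \/ e q1 b) /\
  uniq [:: p1; q1; r1; t1; a; b; c; d] /\
  S = [set p1; q1; r1; t1; a; b; c; d] /\ B = [set t1].
Definition C13 e S B := exists a b x y m2 s2 t2 m3 s3 t3,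
  Dia e (Ex 3) (Ex 5) (Ex 5) (Ex 5) a b x y /\
  Dia e (Ex 5) (Ex 3) (Ex 4) (AL 5) x m2 s2 t2 /\
  Dia e (Ex 5) (Ex 3) (Ex 4) (AL 5) y m3 s3 t3 /\
  uniq [:: a; b; x; y; m2; s2; t2; m3; s3; t3] /\
  S = [set a; b; x; y; m2; s2; t2; m3; s3; t3] /\ B = [set t2; t3].

Definition some_config e S B : Prop :=
  C1 e S B \/ C2 e S B \/ C3 e S B \/ C4 e S B \/ C5 e S B \/ C6 e S B \/ C7 e S B \/
  C8 e S B \/ C9 e S B \/ C10 e S B \/ C11 e S B \/ C12 e S B \/ C13 e S B.

End Defs.

From HB Require Import structures.
From mathcomp Require Import all_boot all_algebra zify.
Set Implicit Arguments. Unset Strict Implicit. Unset Printing Implicit Defensive.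
Import GRing.Theory.

(* Each configuration H is shown (F,4)-boundary-reducible by a finite
   certificate over an indexing vs of V(H), checked by computation.
   - Both FIX and FORB ask for an L-colouring of R = V(H) \ B from lists whose
     sizes are bounded below by 4 - deg_G + deg_R (minus corrections).  Such a
     colouring exists as soon as R can be peeled, vertex by vertex, so that
     each peeled vertex has fewer neighbours left to colour than its list has
     colours (colorable_extend, peelable_sound).  A vertex of G-degree at most
     D(x) is peelable once enough of its configuration neighbours are already
     peeled (degree_bound, peel_ok_bound): a purely combinatorial test.
   - In FORB, |I| <= 2, so I = {} or I = {x, y}.  Either a peeling still works
     with the lists of x and y one shorter, or the certificate exhibits a copy
     of K4, C5, C6, C7 or B5 in H + z, contradicting that I is F-free
     (embeds_contains, witness_not_free).
   - certificate_reducible turns a checked certificate into boundary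
     reducibility; each of (C1)-(C13) then comes with its certificate, and the
     theorem is the case analysis over the configurations. *)

Section ListColouring.
Variables (T : finType) (e : rel T).
Hypotheses (e_sym : symmetric e) (e_irr : irreflexive e).

Lemma colorable_set0 (L : T -> seq nat) : colorable e set0 L.
Proof. by exists (fun _ => 0); split => [v|u v]; rewrite inE. Qed.

Lemma colorable_extend (R : {set T}) (x : T) (L : T -> seq nat) :
  x \in R -> colorable e (R :\ x) L ->
  #|[set u in R :\ x | e x u]| < size (undup (L x)) -> colorable e R L.
Proof.
move=> xR [c [cL cE]] lt_nbrs.
set used := [seq c u | u <- enum [set u in R :\ x | e x u]].
have : has (fun col => col \notin used) (undup (L x)).
  apply/negPn/negP => /hasPn all_used.
  have := uniq_leq_size (undup_uniq (L x)) (fun y yL => negbNE (all_used y yL)).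
  by rewrite size_map -cardE leqNgt lt_nbrs.
case/hasP => col; rewrite mem_undup => colL col_free.
exists (fun u => if u == x then col else c u); split.
  move=> v vR; case: eqP => [->|/eqP nvx] //.
  by apply: cL; rewrite !inE nvx vR.
move=> u v uR vR euv.
case: (eqVneq u x) => [eux|nux]; case: (eqVneq v x) => [evx|nvx].
- by subst; rewrite e_irr in euv.
- subst u; apply: contraNneq col_free => ->; apply: map_f.
  by rewrite mem_enum !inE nvx vR euv.
- subst v; rewrite eq_sym; apply: contraNneq col_free => ->; apply: map_f.
  by rewrite mem_enum !inE nux uR e_sym euv.
- by apply: cE => //; rewrite !inE ?nux ?nvx ?uR ?vR.
Qed.

End ListColouring.

Definition img (T : finType) (x0 : T) (vs : seq T) (s : seq nat) : {set T} :=
  [set u in map (nth x0 vs) s].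

Section Peeling.
Variables (T : finType) (e : rel T) (x0 : T) (vs : seq T) (R : {set T}).
Hypotheses (e_sym : symmetric e) (e_irr : irreflexive e) (vs_uniq : uniq vs).
Variable adj : rel nat.
Hypothesis adjP : forall i j, adj i j -> e (nth x0 vs i) (nth x0 vs j).

Local Notation vx := (nth x0 vs).

Definition valid_idx (i : nat) : bool := (i < size vs) && (vx i \in R).

Lemma vx_inj : {in [pred i | i < size vs] &, injective vx}.
Proof. by move=> i j il jl /eqP; rewrite nth_uniq // => /eqP. Qed.

Lemma img_rem (Rem : seq nat) (x : nat) :
  uniq Rem -> {subset Rem <= [pred i | i < size vs]} -> x \in Rem ->
  img x0 vs (rem x Rem) = img x0 vs Rem :\ vx x.
Proof.
move=> Rem_uniq Rem_lt xRem; apply/setP => u; rewrite !inE (rem_filter _ Rem_uniq).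
apply/mapP/andP => [[i]|[nux /mapP [i iRem ui]]].
  rewrite mem_filter => /andP [/= nix iRem] ->; split; last exact: map_f.
  by apply: contra nix => /eqP /vx_inj -> //; apply: Rem_lt.
exists i => //; rewrite mem_filter iRem andbT /=.
by apply: contraNneq nux => ix; rewrite ui ix.
Qed.

(* Among the neighbours of x in R are its neighbours still to be coloured and
   its adj-neighbours already peeled off; these two sets are disjoint. *)
Lemma degree_bound (Rem Done : seq nat) (x : nat) :
  uniq (Rem ++ Done) -> {subset Rem ++ Done <= valid_idx} -> x \in Rem ->
  #|[set u in img x0 vs Rem :\ vx x | e (vx x) u]| + count (adj x) Done
    <= degR e R (vx x).
Proof.
move=> RD_uniq RD_valid xRem.
have RD_lt i : i \in Rem ++ Done -> i < size vs by case/RD_valid/andP.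
have RD_R i : i \in Rem ++ Done -> vx i \in R by case/RD_valid/andP.
set N := [set u in _ | _].
set K := img x0 vs [seq j <- Done | adj x j].
move: (RD_uniq); rewrite cat_uniq => /and3P [Rem_uniq Rem_Done Done_uniq].
have cardK : #|K| = count (adj x) Done.
  have Ku : uniq [seq vx j | j <- Done & adj x j].
    rewrite map_inj_in_uniq ?filter_uniq // => i j.
    rewrite !mem_filter => /andP [_ iD] /andP [_ jD].
    by apply: vx_inj; rewrite inE RD_lt // mem_cat ?iD ?jD orbT.
  by rewrite cardsE (card_uniqP Ku) size_map size_filter.
have disjNK : N :&: K = set0.
  apply/setP => u; rewrite !inE; apply/negbTE/andP.
  case=> /andP [/andP [_ /mapP [i iRem ->]] _] /mapP [j].
  rewrite mem_filter => /andP [_ jD] /vx_inj ij.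
  have {}ij : i = j by apply: ij; rewrite inE RD_lt // mem_cat ?iRem ?jD ?orbT.
  by case/hasP: Rem_Done; exists i; rewrite // ij.
have subNK : N :|: K \subset [set u in R | e (vx x) u].
  apply/subsetP => u; rewrite !inE => /orP [/andP [/andP [_ /mapP [i iRem ->]] ->]|].
    by rewrite RD_R // mem_cat iRem.
  case/mapP => j; rewrite mem_filter => /andP [xj jD] ->.
  by rewrite adjP // RD_R // mem_cat jD orbT.
have := subset_leq_card subNK.
by rewrite cardsU disjNK cards0 subn0 cardK.
Qed.

(* Colouring in the
   reverse order, each removed vertex is coloured after the remaining ones. *)
Fixpoint peelable (ok : seq nat -> seq nat -> nat -> bool) (fuel : nat)
    (Rem Done : seq nat) : bool :=
  nilp Rem ||
  if fuel is fuel'.+1 then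
    if [seq x <- Rem | ok Rem Done x] is x :: _ then
      peelable ok fuel' (rem x Rem) (x :: Done)
    else false
  else false.

Lemma peelable_sound (L : T -> seq nat) (ok : seq nat -> seq nat -> nat -> bool) :
  (forall Rem Done x, uniq (Rem ++ Done) -> {subset Rem ++ Done <= valid_idx} ->
     x \in Rem -> ok Rem Done x ->
     #|[set u in img x0 vs Rem :\ vx x | e (vx x) u]| < size (undup (L (vx x)))) ->
  forall fuel Rem Done, uniq (Rem ++ Done) -> {subset Rem ++ Done <= valid_idx} ->
  peelable ok fuel Rem Done -> colorable e (img x0 vs Rem) L.
Proof.
have img_nil : img x0 vs [::] = set0 by apply/setP => u; rewrite !inE.
move=> okP; elim=> [|fuel IH] Rem Done RD_uniq RD_valid /=.
  by rewrite orbF => /nilP ->; rewrite img_nil; apply: colorable_set0.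
case/orP => [/nilP ->|]; first by rewrite img_nil; apply: colorable_set0.
case accepted: [seq x <- Rem | ok Rem Done x] => [|x s] // peel_rest.
have /andP [okx xRem] : ok Rem Done x && (x \in Rem).
  by have := mem_head x s; rewrite -accepted mem_filter.
have perm_RD : perm_eq (rem x Rem ++ x :: Done) (Rem ++ Done).
  rewrite (perm_catCA (rem x Rem) [:: x] Done) perm_sym catA perm_cat2r.
  exact: perm_to_rem.
have Rem_uniq : uniq Rem by move: RD_uniq; rewrite cat_uniq => /andP [].
have Rem_lt : {subset Rem <= [pred i | i < size vs]}.
  by move=> i iRem; have /RD_valid/andP [] : i \in Rem ++ Done by rewrite mem_cat iRem.
apply: (colorable_extend e_sym e_irr (x := vx x)); first by rewrite inE map_f.
- rewrite -img_rem //; apply: (IH _ (x :: Done)) => //.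
    by rewrite (perm_uniq perm_RD).
  by move=> i; rewrite (perm_mem perm_RD); apply: RD_valid.
- exact: (okP Rem Done x).
Qed.

(* The acceptance rule used by the certificates: a designated vertex (the one
   with a 1-list in FIX) is coloured first, i.e. peeled last; any other vertex
   needs its degree bound D, plus the reduction red of its list, to be small
   compared with its number of already peeled configuration neighbours. *)
Definition peel_ok (D red : nat -> nat) (fixo : option nat)
    (Rem Done : seq nat) (x : nat) : bool :=
  if fixo == Some x then size Rem == 1
  else D x + red x <= 3 + count (adj x) Done.

Lemma peel_ok_bound (L : T -> seq nat) (D red : nat -> nat) (fixo : option nat) :
  (forall i, valid_idx i ->
     if fixo == Some i then 0 < size (undup (L (vx i)))
     else degR e R (vx i) + 4 <= size (undup (L (vx i))) + D i + red i) ->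
  forall Rem Done x, uniq (Rem ++ Done) -> {subset Rem ++ Done <= valid_idx} ->
  x \in Rem -> peel_ok D red fixo Rem Done x ->
  #|[set u in img x0 vs Rem :\ vx x | e (vx x) u]| < size (undup (L (vx x))).
Proof.
move=> Lsize Rem Done x RD_uniq RD_valid xRem; rewrite /peel_ok.
have := Lsize x (RD_valid x _); rewrite mem_cat xRem => /(_ isT).
case: ifP => _ Lx.
  case: Rem xRem {RD_uniq RD_valid} => [|y [|//]] //; rewrite inE => /eqP <- _.
  apply: leq_trans _ Lx; rewrite ltnS leqn0 cards_eq0; apply/eqP/setP => u.
  by rewrite !inE; case: eqP => // ->; rewrite eqxx.
move=> /= okx; move: Lx okx (degree_bound RD_uniq RD_valid xRem).
by move: #|_| (count _ _) (degR _ _ _) (size _) (D x) (red x) => *; lia.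
Qed.
End Peeling.

Inductive forb_pat := PK4 | PC5 | PC6 | PC7 | PB5.

Lemma forb_pat_eq_dec : comparable forb_pat.
Proof. by move=> p q; rewrite /decidable; decide equality. Qed.
HB.instance Definition _ := comparableMixin forb_pat_eq_dec.

Definition cycle_nat (k a b : nat) : bool := (b == a.+1 %% k) || (a == b.+1 %% k).

Definition pat_size (p : forb_pat) : nat :=
  match p with PK4 => 4 | PC5 | PB5 => 5 | PC6 => 6 | PC7 => 7 end.

Definition pat_nat (p : forb_pat) : rel nat :=
  match p with
  | PK4 => fun a b => a != b
  | PC5 => cycle_nat 5 | PC6 => cycle_nat 6 | PC7 => cycle_nat 7
  | PB5 => fun a b => [|| (a == 0) && (b == 1), (a == 1) && (b == 0),
                         (a <= 1) && (2 <= b) | (b <= 1) && (2 <= a)]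
  end.

(* The graph H + z on indices: n stands for the new vertex z, adjacent to I. *)
Definition ext_adj (n : nat) (adj : rel nat) (I : seq nat) : rel nat := fun a b =>
  if a == n then (b != n) && (b \in I) else if b == n then a \in I else adj a b.

(* m lists the images of the pattern vertices 0, ..., k-1 in H + z. *)
Definition embeds (k : nat) (P G : rel nat) (n : nat) (m : seq nat) : bool :=
  [&& size m == k, uniq m, all (fun a => a <= n) m &
   all (fun a => all (fun b => P a b ==> G (nth 0 m a) (nth 0 m b)) (iota 0 k))
       (iota 0 k)].

(* A witness (i, j, p, m) records an embedding m of the pattern p into H + z
   when z is attached to vertices i and j. *)
Definition witness_ok (n : nat) (adj : rel nat)
    (W : seq (nat * nat * forb_pat * seq nat)) (i j : nat) : bool :=
  has (fun w => (w.1.1 \in [:: (i, j); (j, i)]) &&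
                embeds (pat_size w.1.2) (pat_nat w.1.2) (ext_adj n adj [:: i; j]) n w.2) W.

Section Witnesses.
Variables (T : finType) (e : rel T) (x0 : T) (vs : seq T) (S I : {set T}).
Hypotheses (vs_uniq : uniq vs) (S_vs : S =i vs).
Variable adj : rel nat.
Hypothesis adjP : forall i j, adj i j -> e (nth x0 vs i) (nth x0 vs j).

Local Notation n := (size vs).

Lemma embeds_contains (Iidx : seq nat) k (P : rel 'I_k) (Pn : rel nat) m :
  (forall a, a \in Iidx -> nth x0 vs a \in I) ->
  (forall a b : 'I_k, P a b -> Pn a b) -> embeds k Pn (ext_adj n adj Iidx) n m ->
  contains_sub (ext_vset S) (ext_rel S I e) P.
Proof.
move=> IidxP PPn /and4P [/eqP size_m m_uniq /allP m_le mP].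
have m_lt (a : 'I_k) : nth 0 m a != n -> nth 0 m a < n.
  by rewrite ltn_neqAle => -> /=; apply: m_le; rewrite mem_nth ?size_m.
have m_inj (a b : 'I_k) : nth 0 m a = nth 0 m b -> a = b.
  by move/eqP; rewrite nth_uniq ?size_m // => /eqP /val_inj.
exists (fun a => if nth 0 m a == n then None else Some (nth x0 vs (nth 0 m a))).
split; [|split].
- move=> a b /=; case: ifP => Ha; case: ifP => Hb //.
    by move=> _; apply: m_inj; rewrite (eqP Ha) (eqP Hb).
  by case=> /eqP; rewrite nth_uniq ?m_lt ?Ha ?Hb // => /eqP /m_inj.
- move=> a; rewrite /ext_vset; case: ifP => Ha; rewrite !inE //.
  by rewrite imset_f ?orbT // S_vs mem_nth ?m_lt ?Ha.
- move=> a b Pab; move/allP/(_ a): mP; rewrite mem_iota ltn_ord => /(_ isT).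
  move/allP/(_ b); rewrite mem_iota ltn_ord PPn // => /(_ isT) /=.
  rewrite /ext_adj; case: eqP => Ha; case: eqP => Hb //=.
  + exact: IidxP.
  + exact: IidxP.
  + exact: adjP.
Qed.

Lemma witness_not_free (W : seq (nat * nat * forb_pat * seq nat)) (i j : nat) :
  nth x0 vs i \in I -> nth x0 vs j \in I -> witness_ok n adj W i j ->
  ~ F_free (ext_vset S) (ext_rel S I e).
Proof.
move=> iI jI /hasP [[[ij p] m] _ /andP [_ m_emb]] [noK4 [noC5 [noC6 [noC7 noB5]]]].
have IidxP a : a \in [:: i; j] -> nth x0 vs a \in I by rewrite !inE => /orP [] /eqP ->.
have contains := embeds_contains IidxP _ m_emb.
case: p {m_emb} contains => /= contains.
- by apply: noK4; apply: contains.
- by apply: noC5; apply: contains.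
- by apply: noC6; apply: contains.
- by apply: noC7; apply: contains.
- by apply: noB5; apply: contains.
Qed.
End Witnesses.

Definition config_adj (E : seq (nat * nat)) (i j : nat) : bool :=
  ((i, j) \in E) || ((j, i) \in E).

Definition reduced_idx (n : nat) (Bd : seq nat) : seq nat :=
  [seq i <- iota 0 n | i \notin Bd].

Definition fix_ok (n : nat) (E : seq (nat * nat)) (D Bd : seq nat) : bool :=
  all (fun v => peelable (peel_ok (config_adj E) (nth 0 D) (fun _ => 0) (Some v))
                         n (reduced_idx n Bd) [::])
      (reduced_idx n Bd).

Definition forb_ok (n : nat) (E : seq (nat * nat)) (D Bd : seq nat)
    (W : seq (nat * nat * forb_pat * seq nat)) : bool :=
  peelable (peel_ok (config_adj E) (nth 0 D) (fun _ => 0) None)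
           n (reduced_idx n Bd) [::] &&
  all (fun i => all (fun j => witness_ok n (config_adj E) W i j ||
      peelable (peel_ok (config_adj E) (nth 0 D) (fun a => a \in [:: i; j]) None) n
               (reduced_idx n Bd) [::])
    (reduced_idx n Bd)) (reduced_idx n Bd).

Definition certificate_ok (n : nat) (E : seq (nat * nat)) (D Bd : seq nat)
    (W : seq (nat * nat * forb_pat * seq nat)) : bool :=
  [&& reduced_idx n Bd != [::], fix_ok n E D Bd & forb_ok n E D Bd W].

Lemma bval_size_bound (T : finType) (e : rel T) (R : {set T}) (u : T) (c s : nat) :
  (bval 4 e R u - c%:Z <= s%:Z)%R -> degR e R u + 4 <= s + deg e u + c.
Proof. rewrite /bval; lia. Qed.

Lemma card_le2 (T : finType) (I : {set T}) :
  #|I| <= 2 -> I = set0 \/ exists x y, I = [set x; y].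
Proof.
rewrite leq_eqVlt ltnS leq_eqVlt ltnS leqn0.
case/or3P => [/cards2P [x [y [_ ->]]]|/cards1P [x ->]|/eqP /cards0_eq ->]; try by left.
- by right; exists x, y.
- by right; exists x, x; rewrite setUid.
Qed.

Section Certificate.
Variables (T : finType) (e : rel T) (x0 : T) (vs : seq T) (S B : {set T}).
Hypotheses (e_sym : symmetric e) (e_irr : irreflexive e).
Hypotheses (vs_uniq : uniq vs) (S_vs : S =i vs).
Variables (E : seq (nat * nat)) (D Bd : seq nat) (W : seq (nat * nat * forb_pat * seq nat)).
Hypothesis B_Bd : B =i [seq nth x0 vs j | j <- Bd].
Hypothesis Bd_lt : all (fun j => j < size vs) Bd.
Hypothesis E_edges : all (fun p => e (nth x0 vs p.1) (nth x0 vs p.2)) E.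
Hypothesis D_bound :
  all (fun i => deg e (nth x0 vs i) <= nth 0 D i) (reduced_idx (size vs) Bd).

Local Notation n := (size vs).
Local Notation vx := (nth x0 vs).
Local Notation Ridx := (reduced_idx n Bd).

Lemma config_adjP (i j : nat) : config_adj E i j -> e (vx i) (vx j).
Proof. by case/orP => /(allP E_edges) //=; rewrite e_sym. Qed.

Lemma reduced_idx_lt (i : nat) : i \in Ridx -> i < n.
Proof. by rewrite mem_filter mem_iota => /and3P []. Qed.

Lemma reduced_idxE (i : nat) : i < n -> (vx i \in S :\: B) = (i \in Ridx).
Proof.
move=> il; rewrite !inE S_vs B_Bd mem_nth // mem_filter mem_iota il leq0n !andbT.
congr negb; apply/mapP/idP => [[j jB /eqP]|iB]; last by exists i.
by rewrite nth_uniq ?(allP Bd_lt j jB) // => /eqP ->.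
Qed.

Lemma reduced_vertex (u : T) : u \in S :\: B -> exists2 i, i \in Ridx & u = vx i.
Proof.
move=> uR; have uvs : u \in vs by move: uR; rewrite !inE S_vs => /andP [].
exists (index u vs); last by rewrite nth_index.
by rewrite -reduced_idxE ?index_mem ?nth_index.
Qed.

Lemma img_reduced : img x0 vs Ridx = S :\: B.
Proof.
apply/setP => u; rewrite inE; apply/mapP/idP => [[i iR ->]|/reduced_vertex //].
by rewrite reduced_idxE ?reduced_idx_lt.
Qed.

Lemma reduced_valid : {subset Ridx ++ [::] <= valid_idx x0 vs (S :\: B)}.
Proof.
move=> i; rewrite cats0 => iR; apply/andP; split; first exact: reduced_idx_lt.
by rewrite reduced_idxE ?reduced_idx_lt ?iR.
Qed.

Lemma peel_colorable (L : T -> seq nat) (red : nat -> nat) (fixo : option nat) :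
  (forall i, i \in Ridx ->
     if fixo == Some i then 0 < size (undup (L (vx i)))
     else degR e (S :\: B) (vx i) + 4 <= size (undup (L (vx i))) + deg e (vx i) + red i) ->
  peelable (peel_ok (config_adj E) (nth 0 D) red fixo) n Ridx [::] ->
  colorable e (S :\: B) L.
Proof.
move=> Lsize peel; rewrite -img_reduced.
apply: (peelable_sound e_sym e_irr vs_uniq _ _ reduced_valid peel); last first.
  by rewrite cats0 filter_uniq ?iota_uniq.
apply: (peel_ok_bound vs_uniq config_adjP) => i /andP [il].
rewrite reduced_idxE // => iR; have := Lsize i iR; case: ifP => // _ Li.
by apply: leq_trans Li _; rewrite -!addnA leq_add2l leq_add2r (allP D_bound).
Qed.

Lemma fix_colorable : fix_ok n E D Bd ->
  forall v, v \in S :\: B -> forall L,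
  is_fassign (S :\: B) (fun u => if u == v then 1%R else bval 4 e (S :\: B) u) L ->
  colorable e (S :\: B) L.
Proof.
move=> /allP fixP v vR L; have [i iR ->] := reduced_vertex vR => Lsize.
apply: (peel_colorable _ (fixP i iR)) => j jR /=.
have := Lsize (vx j); rewrite reduced_idxE ?reduced_idx_lt // => /(_ jR).
have -> : (Some i == Some j) = (vx j == vx i).
  by rewrite /= nth_uniq ?reduced_idx_lt // eq_sym.
case: ifP => _ Lj; first by move: Lj; move: (size _) => k; lia.
by apply: (bval_size_bound (c := 0)); rewrite subr0.
Qed.

Lemma forb_colorable : forb_ok n E D Bd W ->
  forall I : {set T}, I \subset S :\: B ->
  F_free (ext_vset S) (ext_rel S I e) -> #|I| <= 4 - 2 ->
  forall L, is_fassign (S :\: B)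
    (fun u => bval 4 e (S :\: B) u - (nat_of_bool (u \in I))%:Z)%R L ->
  colorable e (S :\: B) L.
Proof.
move=> /andP [peel0 /allP peel2] I IR freeI cardI L Lsize.
have colour_by red : (forall i, i \in Ridx -> (vx i \in I) <= red i) ->
    peelable (peel_ok (config_adj E) (nth 0 D) red None) n Ridx [::] ->
    colorable e (S :\: B) L.
  move=> red_ge; apply: peel_colorable => i iR /=.
  have /bval_size_bound Li := Lsize (vx i) (etrans (reduced_idxE (reduced_idx_lt iR)) iR).
  by apply: leq_trans Li _; rewrite leq_add2l red_ge.
have [I0 | [x [y I2]]] := card_le2 cardI.
  by apply: (colour_by (fun _ => 0)) peel0 => i _; rewrite I0 inE.
have [xR yR] : x \in S :\: B /\ y \in S :\: B.
  by split; apply: (subsetP IR); rewrite I2 !inE eqxx ?orbT.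
have [i iR xi] := reduced_vertex xR; have [j jR yj] := reduced_vertex yR.
case/orP: (allP (peel2 i iR) j jR) => [wit|peel].
  by case: (witness_not_free vs_uniq S_vs config_adjP _ _ wit freeI);
     rewrite I2 !inE -?xi -?yj eqxx ?orbT.
apply: (colour_by _ _ peel) => k kR.
by rewrite I2 !inE xi yj !nth_uniq ?reduced_idx_lt.
Qed.

Lemma certificate_reducible :
  certificate_ok n E D Bd W -> boundary_reducible F_free 4 e S (S :\: B).
Proof.
case/and3P => R_nonempty fixP forbP; split.
- exact: subsetDl.
- rewrite -img_reduced; case: Ridx R_nonempty => // i s _.
  by apply/set0Pn; exists (vx i); rewrite inE mem_head.
- exact: fix_colorable.
- exact: forb_colorable.
Qed.
End Certificate.

Ltac destruct_config := repeat match goal with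
  | H : exists _, _ |- _ => destruct H
  | H : _ /\ _ |- _ => destruct H
  | H : Dia _ _ _ _ _ _ _ _ _ |- _ => hnf in H
  | H : diamond _ _ _ _ _ |- _ => hnf in H
  | H : dsat _ _ _ |- _ => simpl in H
  end.

Tactic Notation "certify" constr(vs) uconstr(E) uconstr(D) uconstr(Bd) uconstr(W) :=
  lazymatch vs with ?x0 :: _ =>
  simple refine (@certificate_reducible _ _ x0 vs _ _ _ _ _ _ E D Bd W _ _ _ _ _);
  [ assumption | assumption | first [assumption | done]
  | by move=> z; rewrite !inE ?orbA
  | by move=> z; rewrite /= !inE ?orbA
  | by []
  | by rewrite /=; repeat (apply/andP; split)
  | rewrite /=; repeat (apply/andP; split); try done;
    match goal with H : deg _ ?x = _ |- is_true (deg _ ?x <= _) => by rewrite H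
                  | _ => assumption end
  | by vm_compute ]
  end.

(* After listing V(H) as vs, the arguments of certify are
   the edges of H (as index pairs), the degree of each vertex (0, i.e. no
   constraint, on the boundary), the indices of the boundary, and witnesses
   (i, j, p, m): with z attached to the i-th and j-th vertices, m embeds the
   pattern p into H + z, the index size vs standing for z. *)
Section Configurations.
Variables (T : finType) (e : rel T).
Hypotheses (e_sym : symmetric e) (e_irr : irreflexive e).

Lemma C1_reducible (S B : {set T}) :
  C1 e S B -> boundary_reducible F_free 4 e S (S :\: B).
Proof.
case=> v H; destruct_config; subst S B.
by certify [:: v] [::] [:: 2] [::] [::].
Qed.

Lemma C2_reducible (S B : {set T}) :
  C2 e S B -> boundary_reducible F_free 4 e S (S :\: B).
Proof.
case=> u [v [w H]]; destruct_config; subst S B.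
by certify [:: u; v; w] [:: (0, 1); (1, 2)] [:: 3; 3; 3] [::] [::].
Qed.

Lemma C3_reducible (S B : {set T}) :
  C3 e S B -> boundary_reducible F_free 4 e S (S :\: B).
Proof.
case=> u [v [w H]]; destruct_config; subst S B.
by certify [:: u; v; w] [:: (0, 1); (1, 2); (0, 2)] [:: 3; 3; 3] [::] [::].
Qed.

Lemma C4_reducible (S B : {set T}) :
  C4 e S B -> boundary_reducible F_free 4 e S (S :\: B).
Proof.
case=> m1 [m2 [s1 [s2 [u H]]]]; destruct_config; subst S B.
by certify [:: m1; m2; s1; s2; u]
  [:: (0, 1); (0, 2); (0, 3); (1, 2); (1, 3); (4, 0)]
  [:: 4; 3; 4; 0; 3] [:: 3]
  [:: (0, 1, PB5, [:: 0; 1; 2; 3; 5]); (1, 4, PC5, [:: 0; 2; 1; 5; 4])].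
Qed.

Lemma C5_reducible (S B : {set T}) :
  C5 e S B -> boundary_reducible F_free 4 e S (S :\: B).
Proof.
case=> m1 [m2 [s1 [s2 H]]]; destruct_config; subst S B.
by certify [:: m1; m2; s1; s2]
  [:: (0, 1); (0, 2); (0, 3); (1, 2); (1, 3)]
  [:: 3; 3; 0; 0] [:: 2; 3]
  [:: (0, 1, PB5, [:: 0; 1; 2; 3; 4])].
Qed.

Lemma C6_reducible (S B : {set T}) :
  C6 e S B -> boundary_reducible F_free 4 e S (S :\: B).
Proof.
case=> m1 [m2 [s1 [s2 H]]]; destruct_config; subst S B.
by certify [:: m1; m2; s1; s2]
  [:: (0, 1); (0, 2); (0, 3); (1, 2); (1, 3)]
  [:: 3; 0; 3; 0] [:: 1; 3]
  [:: (0, 2, PC5, [:: 0; 3; 1; 2; 4])].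
Qed.

Lemma C7_reducible (S B : {set T}) :
  C7 e S B -> boundary_reducible F_free 4 e S (S :\: B).
Proof.
case=> m1 [m2 [s1 [s2 H]]]; destruct_config; subst S B.
by certify [:: m1; m2; s1; s2]
  [:: (0, 1); (0, 2); (0, 3); (1, 2); (1, 3)]
  [:: 5; 4; 3; 3] [::]
  [:: (1, 2, PC5, [:: 0; 2; 4; 1; 3]);
      (1, 3, PC5, [:: 0; 2; 1; 4; 3]);
      (2, 3, PC5, [:: 0; 1; 2; 4; 3])].
Qed.

Lemma C8_reducible (S B : {set T}) :
  C8 e S B -> boundary_reducible F_free 4 e S (S :\: B).
Proof.
case=> a1 [b1 [x [c1 [m [s [v H]]]]]]; destruct_config; subst S B.
by certify [:: a1; b1; x; c1; m; s; v]
  [:: (0, 1); (0, 2); (0, 3); (1, 2); (1, 3); (2, 4); (2, 5); (2, 6); (4, 5); (4, 6)]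
  [:: 4; 4; 5; 3; 3; 4; 0] [:: 6]
  [:: (2, 3, PC5, [:: 0; 1; 2; 7; 3]);
      (2, 4, PB5, [:: 2; 4; 5; 6; 7]);
      (3, 4, PC5, [:: 0; 2; 4; 7; 3]);
      (3, 5, PC5, [:: 0; 2; 5; 7; 3])].
Qed.

Lemma C9_reducible (S B : {set T}) :
  C9 e S B -> boundary_reducible F_free 4 e S (S :\: B).
Proof.
case=> p1 [q1 [r1 [t1 [p2 [q2 [r2 [t2 H]]]]]]]; destruct_config; subst S B.
by certify [:: p1; q1; r1; t1; p2; q2; r2; t2]
  [:: (0, 1); (0, 2); (0, 3); (1, 2); (1, 3); (4, 5);
      (4, 6); (4, 7); (5, 6); (5, 7); (1, 5)]
  [:: 3; 4; 4; 0; 3; 4; 4; 0] [:: 3; 7]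
  [:: (0, 1, PB5, [:: 0; 1; 2; 3; 8]);
      (0, 4, PC5, [:: 0; 1; 5; 4; 8]);
      (4, 5, PB5, [:: 4; 5; 6; 7; 8])].
Qed.

Lemma C10_reducible (S B : {set T}) :
  C10 e S B -> boundary_reducible F_free 4 e S (S :\: B).
Proof.
case=> a [b [p [q [m [s [v H]]]]]]; destruct_config; subst S B.
by certify [:: a; b; p; q; m; s; v]
  [:: (0, 1); (0, 2); (0, 3); (1, 2); (1, 3); (3, 4); (3, 5); (3, 6); (4, 5); (4, 6)]
  [:: 4; 3; 0; 5; 3; 4; 0] [:: 2; 6]
  [:: (0, 4, PC5, [:: 0; 1; 3; 4; 7]);
      (1, 3, PC5, [:: 0; 2; 1; 7; 3]);
      (1, 4, PC5, [:: 0; 1; 7; 4; 3]);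
      (1, 5, PC5, [:: 0; 1; 7; 5; 3]);
      (3, 4, PB5, [:: 3; 4; 5; 6; 7])].
Qed.

Lemma C11_reducible (S B : {set T}) :
  C11 e S B -> boundary_reducible F_free 4 e S (S :\: B).
Proof.
case=> m1 [m2 [s1 [s2 [u H]]]]; destruct_config; subst S B.
lazymatch goal with H : _ \/ _ |- _ => case: H => H end.
- by certify [:: m1; m2; s1; s2; u]
    [:: (0, 1); (0, 2); (0, 3); (1, 2); (1, 3); (4, 0)]
    [:: 4; 4; 3; 4; 3] [::]
    [:: (0, 2, PC5, [:: 0; 3; 1; 2; 5]); (2, 4, PC5, [:: 0; 1; 2; 5; 4])].
- by certify [:: m1; m2; s1; s2; u]
    [:: (0, 1); (0, 2); (0, 3); (1, 2); (1, 3); (4, 1)]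
    [:: 4; 4; 3; 4; 3] [::]
    [:: (1, 2, PC5, [:: 0; 2; 5; 1; 3]); (2, 4, PC5, [:: 0; 1; 4; 5; 2])].
Qed.

Lemma C12_reducible (S B : {set T}) :
  C12 e S B -> boundary_reducible F_free 4 e S (S :\: B).
Proof.
case=> p1 [q1 [r1 [t1 [a [b [c [d H]]]]]]]; destruct_config; subst S B.
lazymatch goal with H : _ \/ _ |- _ => case: H => H end.
- by certify [:: p1; q1; r1; t1; a; b; c; d]
    [:: (0, 1); (0, 2); (0, 3); (1, 2); (1, 3); (4, 5);
        (4, 6); (4, 7); (5, 6); (5, 7); (1, 4)]
    [:: 3; 4; 4; 0; 4; 4; 4; 3] [:: 3]
    [:: (0, 1, PB5, [:: 0; 1; 2; 3; 8]);
        (0, 7, PC5, [:: 0; 1; 4; 7; 8]);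
        (4, 7, PC5, [:: 4; 6; 5; 7; 8])].
- by certify [:: p1; q1; r1; t1; a; b; c; d]
    [:: (0, 1); (0, 2); (0, 3); (1, 2); (1, 3); (4, 5);
        (4, 6); (4, 7); (5, 6); (5, 7); (1, 5)]
    [:: 3; 4; 4; 0; 4; 4; 4; 3] [:: 3]
    [:: (0, 1, PB5, [:: 0; 1; 2; 3; 8]);
        (0, 7, PC5, [:: 0; 1; 5; 7; 8]);
        (5, 7, PC5, [:: 4; 6; 5; 8; 7])].
Qed.

Lemma C13_reducible (S B : {set T}) :
  C13 e S B -> boundary_reducible F_free 4 e S (S :\: B).
Proof.
case=> a [b [x [y [m2 [s2 [t2 [m3 [s3 [t3 H]]]]]]]]]; destruct_config; subst S B.
by certify [:: a; b; x; y; m2; s2; t2; m3; s3; t3]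
  [:: (0, 1); (0, 2); (0, 3); (1, 2); (1, 3); (2, 4); (2, 5); (2, 6);
      (4, 5); (4, 6); (3, 7); (3, 8); (3, 9); (7, 8); (7, 9)]
  [:: 3; 5; 5; 5; 3; 4; 0; 3; 4; 0] [:: 6; 9]
  [:: (1, 4, PC5, [:: 0; 1; 10; 4; 2]);
      (1, 7, PC5, [:: 0; 1; 10; 7; 3]);
      (2, 4, PB5, [:: 2; 4; 5; 6; 10]);
      (3, 7, PB5, [:: 3; 7; 8; 9; 10]);
      (4, 7, PC6, [:: 0; 2; 4; 10; 7; 3])].
Qed.

End Configurations.

Theorem mainTheorem6 (T : finType) (e : rel T)
  (e_sym : symmetric e) (e_irr : irreflexive e) :
  F_free [set: T] e ->
  forall S B : {set T}, some_config e S B ->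
  boundary_reducible F_free 4 e S (S :\: B).
Proof.
move=> _ S B.
case=> [|[|[|[|[|[|[|[|[|[|[|[|]]]]]]]]]]]].
- exact: C1_reducible.
- exact: C2_reducible.
- exact: C3_reducible.
- exact: C4_reducible.
- exact: C5_reducible.
- exact: C6_reducible.
- exact: C7_reducible.
- exact: C8_reducible.
- exact: C9_reducible.
- exact: C10_reducible.
- exact: C11_reducible.
- exact: C12_reducible.
- exact: C13_reducible.
Qed.
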